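(* Let $k$ be a field, $\Delta$ a finite connected quiver without oriented cycles, $X$ a finite length $k\Delta$-module and $M$ an endo-finite $k\Delta$-module. Then $$\langle\operatorname{\bold{dim}}X,\operatorname{\bold{Dim}}M\rangle=|{}_{E(M)}\operatorname{Hom}(X,M)|-|{}_{E(M)}\operatorname{Ext}^1(X,M)|,$$ where $|{}_{E(M)}V|$ denotes the length of $V$ as an $E(M)$-module.
   Context: Modules are representations $(M_i,M_\alpha)$ of $\Delta$ with vertex set $\Delta_0$, arrow set $\Delta_1$, arrows $\alpha\colon s(\alpha)\to t(\alpha)$. $E(M)=\operatorname{End}(M)^{\mathrm{op}}$, acting on $\operatorname{Hom}(X,M)$ and $\operatorname{Ext}^1(X,M)$ via $M$; $M$ is endo-finite if it has finite length as $E(M)$-module. $\operatorname{\bold{dim}}X\in\mathbb Z^{\Delta_0}$ has $i$-th entry the Jordan–Hölder multiplicity of the simple $S(i)$ in $X$ (i.e. $\dim_kX_i$), and $(\operatorname{\bold{Dim}}M)_i$ is the length of $M_i$ as an $E(M)$-module. The Euler form is $\langle x,y\rangle=\sum_{i\in\Delta_0}x_iy_i-\sum_{\alpha\in\Delta_1}x_{s(\alpha)}y_{t(\alpha)}$. *)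

From mathcomp Require Import all_boot all_order all_algebra.
Set Implicit Arguments. Unset Strict Implicit. Unset Printing Implicit Defensive.
Import GRing.Theory.
Local Open Scope ring_scope.

Definition quiver_connected (V A : finType) (s t : A -> V) : Prop :=
  forall i j : V,
    connect (fun x y : V =>
      [exists a : A, ((s a == x) && (t a == y)) || ((s a == y) && (t a == x))]) i j.

Definition quiver_acyclic (V A : finType) (s t : A -> V) : Prop :=
  forall p : seq A, p != [::] -> ~~ cycle (fun a b : A => t a == s b) p.

(* Bot <= Top are the bottom and top of the module, so that the length
   computed is the length of the subquotient Top/Bot (Bot = {z} for an
   honest submodule Top). *)

Definition sub_set (W : Type) (P Q : W -> Prop) := forall w, P w -> Q w.
Definition eq_set (W : Type) (P Q : W -> Prop) := forall w, P w <-> Q w.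

Definition submod (W : Type) (z : W) (add : W -> W -> W)
  (E : Type) (isE : E -> Prop) (act : E -> W -> W) (N : W -> Prop) : Prop :=
  N z /\ (forall u v, N u -> N v -> N (add u v)) /\
  (forall e, isE e -> forall u, N u -> N (act e u)).

Definition has_length (W : Type) (z : W) (add : W -> W -> W)
  (E : Type) (isE : E -> Prop) (act : E -> W -> W)
  (Bot Top : W -> Prop) (n : nat) : Prop :=
  exists N : nat -> W -> Prop,
    [/\ eq_set (N 0%N) Bot, eq_set (N n) Top,
        (forall j, (j <= n)%N -> submod z add isE act (N j)) &
        (forall j, (j < n)%N ->
           [/\ sub_set (N j) (N j.+1), ~ sub_set (N j.+1) (N j) &
               forall L, submod z add isE act L -> sub_set (N j) L ->
                 sub_set L (N j.+1) -> eq_set L (N j) \/ eq_set L (N j.+1)])].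

Section Reps.
Variables (k : fieldType) (V A : finType) (s t : A -> V).

Definition lin (U W : lmodType k) (f : U -> W) : Prop :=
  forall (c : k) (u v : U), f (c *: u + v) = c *: f u + f v.

Variables (M : V -> lmodType k) (mM : forall a : A, {linear M (s a) -> M (t a)}).

Definition endoT := forall i : V, M i -> M i.
Definition is_endo (e : endoT) : Prop :=
  (forall i, lin (e i)) /\
  (forall a (m : M (s a)), mM a (e (s a) m) = e (t a) (mM a m)).

Definition totT := forall i : V, M i.
Definition tot_zero : totT := fun i => 0.
Definition tot_add (m m' : totT) : totT := fun i => m i + m' i.
Definition tot_act (e : endoT) (m : totT) : totT := fun i => e i (m i).

Definition endofinite : Prop :=
  exists n, has_length tot_zero tot_add is_endo tot_act
              (fun m => m = tot_zero) (fun _ => True) n.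

Definition Dim_length (i : V) (n : nat) : Prop :=
  has_length (0 : M i) +%R is_endo (fun e (m : M i) => e i m)
             (fun m => m = 0) (fun _ => True) n.

(* X : finite-dimensional representation, X_i = k^(d i) (row vectors),
   X_a : v |-> v *m xA a *)
Variables (d : V -> nat) (xA : forall a : A, 'M[k]_(d (s a), d (t a))).

Definition homT := forall i : V, 'rV[k]_(d i) -> M i.
Definition hom_zero : homT := fun i v => 0.
Definition hom_add (f g : homT) : homT := fun i v => f i v + g i v.
Definition hom_act (e : endoT) (f : homT) : homT := fun i v => e i (f i v).
Definition is_hom (f : homT) : Prop :=
  (forall i, lin (f i)) /\
  (forall a (v : 'rV[k]_(d (s a))), mM a (f (s a) v) = f (t a) (v *m xA a)).

Definition hom_length (n : nat) : Prop :=
  has_length hom_zero hom_add is_endo hom_act (fun f => f = hom_zero) is_hom n.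

(* Ext^1(X, M) = cokernel of
   delta : (+)_i Hom_k(X_i, M_i) -> (+)_a Hom_k(X_(s a), M_(t a)),
   (f_i) |-> (M_a f_(s a) - f_(t a) X_a)_a,
   as an E(M)-module (E(M) acting by postcomposition); its length is the
   length of the interval [Im delta, whole space] of submodules. *)
Definition arrT := forall a : A, 'rV[k]_(d (s a)) -> M (t a).
Definition arr_zero : arrT := fun a v => 0.
Definition arr_add (g h : arrT) : arrT := fun a v => g a v + h a v.
Definition arr_act (e : endoT) (g : arrT) : arrT := fun a v => e (t a) (g a v).
Definition delta (f : homT) : arrT :=
  fun a v => mM a (f (s a) v) - f (t a) (v *m xA a).
Definition is_arr (g : arrT) : Prop := forall a, lin (g a).
Definition im_delta (g : arrT) : Prop :=
  exists f : homT, (forall i, lin (f i)) /\ g = delta f.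

Definition ext_length (n : nat) : Prop :=
  has_length arr_zero arr_add is_endo arr_act im_delta is_arr n.

End Reps.

Definition euler (V A : finType) (s t : A -> V) (x y : V -> nat) : int :=
  \sum_(i : V) ((x i * y i)%N)%:Z - \sum_(a : A) ((x (s a) * y (t a))%N)%:Z.

From HB Require Import structures.
From mathcomp Require Import all_boot all_order all_algebra.
From Stdlib Require Import FunctionalExtensionality PropExtensionality Classical.
Set Implicit Arguments. Unset Strict Implicit. Unset Printing Implicit Defensive.
Import GRing.Theory.
Local Open Scope ring_scope.

(* Lengths are additive along the exact sequence of E(M)-modules
     0 -> Hom(X, M) -> (+)_i Hom_k(X_i, M_i) --delta--> (+)_a Hom_k(X_(s a), M_(t a)) -> Ext^1(X, M) -> 0,
   by the Jordan-Hoelder theorem and the isomorphism theorems for the lattice of submodules.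
   As X_i = k^(d i), evaluation on the standard basis identifies Hom_k(X_i, M_i) with M_i^(d i),
   of length d_i (Dim M)_i, so the two middle terms have lengths sum_i d_i (Dim M)_i and
   sum_a d_(s a) (Dim M)_(t a), whose difference is the Euler form.  The lengths (Dim M)_i exist
   because M_i is the quotient of the endo-finite M by the kernel of the i-th projection. *)

Lemma eq_setE (W : Type) (P Q : W -> Prop) : eq_set P Q -> P = Q.
Proof.
by move=> PQ; apply: functional_extensionality => w; apply: propositional_extensionality.
Qed.

Lemma sub_set_anti (W : Type) (P Q : W -> Prop) : sub_set P Q -> sub_set Q P -> P = Q.
Proof. by move=> PQ QP; apply: eq_setE => w; split=> [/PQ|/QP]. Qed.

Lemma sub_set_trans (W : Type) (P Q R : W -> Prop) :
  sub_set P Q -> sub_set Q R -> sub_set P R.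
Proof. by move=> PQ QR w /PQ /QR. Qed.

Section Length.
Variables (W : Type) (z : W) (add : W -> W -> W)
  (E : Type) (isE : E -> Prop) (act : E -> W -> W).
Local Notation sm := (submod z add isE act).
Local Notation hl := (has_length z add isE act).

Definition simple_quot (K T : W -> Prop) :=
  [/\ sm K, sm T, sub_set K T, ~ sub_set T K &
      forall L, sm L -> sub_set K L -> sub_set L T -> L = K \/ L = T].

Lemma has_length0 B T : hl B T 0 <-> sm B /\ B = T.
Proof.
split=> [[N [/eq_setE <- /eq_setE <- smN _]]|[smB <-]]; first by split; first exact: smN.
by exists (fun=> B); split=> // j; rewrite leqn0 => /eqP ->.
Qed.

Lemma has_lengthS B T n :
  hl B T n.+1 <-> exists2 K, hl B K n & simple_quot K T.
Proof.
split=> [[N [NB /eq_setE <- smN NS]]|[K [N [NB NK smN NS]] [smK smT KT nTK maxK]]].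
  exists (N n); first by exists N; split=> // j ltjn; [exact/smN/leqW | exact/NS/leqW].
  have [NnS nSn maxN] := NS n (ltnSn n).
  split=> //; [exact: smN | exact: smN | move=> L smL NL LN].
  by case: (maxN L smL NL LN) => /eq_setE; [left|right].
exists (fun j => if j <= n then N j else T)%N; split=> //=; first by rewrite ltnn.
  by move=> j _; case: ifP => // /smN.
move=> j; rewrite ltnS => lejn; rewrite lejn.
case: ltngtP lejn => // [ltjn|->] _; first exact: NS.
rewrite (eq_setE NK); split=> // L smL KL LT.
by case: (maxK L smL KL LT) => ->; [left|right].
Qed.

Lemma has_length1 K T : hl K T 1 <-> simple_quot K T.
Proof.
rewrite has_lengthS; split=> [[K' /has_length0[_ ->] //]|sKT].
by exists K => //; apply/has_length0; split=> //; case: sKT.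
Qed.

Lemma has_length_submod B T n : hl B T n -> [/\ sm B, sm T & sub_set B T].
Proof.
elim: n T => [|n IHn] T; first by case/has_length0 => smB <-; split=> // w.
case/has_lengthS=> K /IHn[smB _ BK] [_ smT KT _ _].
by split=> //; apply: sub_set_trans BK KT.
Qed.

Lemma has_length_cat B K T m n : hl B K m -> hl K T n -> hl B T (m + n).
Proof.
move=> hBK; elim: n T => [|n IHn] T; first by case/has_length0 => _ <-; rewrite addn0.
by case/has_lengthS=> K' /IHn hBK' sK'T; rewrite addnS; apply/has_lengthS; exists K'.
Qed.

End Length.

Section LatticeIso.
Variables (W1 : Type) (z1 : W1) (add1 : W1 -> W1 -> W1)
  (E1 : Type) (isE1 : E1 -> Prop) (act1 : E1 -> W1 -> W1).
Variables (W2 : Type) (z2 : W2) (add2 : W2 -> W2 -> W2)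
  (E2 : Type) (isE2 : E2 -> Prop) (act2 : E2 -> W2 -> W2).
Local Notation sm1 := (submod z1 add1 isE1 act1).
Local Notation hl1 := (has_length z1 add1 isE1 act1).
Local Notation sm2 := (submod z2 add2 isE2 act2).
Local Notation hl2 := (has_length z2 add2 isE2 act2).

Variables (B T : W1 -> Prop) (F : (W1 -> Prop) -> W2 -> Prop) (G : (W2 -> Prop) -> W1 -> Prop).
Hypotheses (monoF : forall L L', sub_set L L' -> sub_set (F L) (F L'))
  (monoG : forall L L', sub_set L L' -> sub_set (G L) (G L'))
  (FK : forall L, sm1 L -> sub_set B L -> sub_set L T -> sm2 (F L) /\ G (F L) = L)
  (GK : forall L, sm2 L -> sub_set (F B) L -> sub_set L (F T) -> sm1 (G L) /\ F (G L) = L).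

Lemma simple_quot_iso K L : sub_set B K -> sub_set L T ->
  simple_quot z1 add1 isE1 act1 K L -> simple_quot z2 add2 isE2 act2 (F K) (F L).
Proof.
move=> BK LT [smK smL KL nLK maxK].
have [smFK GFK] := FK smK BK (sub_set_trans KL LT).
have [smFL GFL] := FK smL (sub_set_trans BK KL) LT.
split=> //; first exact: monoF.
  by move=> FLK; apply: nLK; rewrite -GFK -GFL; apply: monoG.
move=> X smX FKX XFL.
have [smGX FGX] := GK smX (sub_set_trans (monoF BK) FKX) (sub_set_trans XFL (monoF LT)).
have KGX : sub_set K (G X) by rewrite -GFK; apply: monoG.
have GXL : sub_set (G X) L by rewrite -GFL; apply: monoG.
by case: (maxK _ smGX KGX GXL) => GXE; [left|right]; rewrite -FGX GXE.
Qed.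

Lemma has_length_iso_sub K n : sub_set K T -> hl1 B K n -> hl2 (F B) (F K) n.
Proof.
elim: n K => [|n IHn] K KT.
  case/has_length0=> smB BK; subst K; apply/has_length0; split=> //.
  by case: (FK smB (fun w => id) KT).
case/has_lengthS=> K' hBK' sK'K; apply/has_lengthS; exists (F K').
  by apply: IHn hBK'; case: sK'K => _ _ K'K _ _; apply: sub_set_trans K'K KT.
by apply: simple_quot_iso => //; case: (has_length_submod hBK').
Qed.

End LatticeIso.

Lemma has_length_iso (W1 : Type) (z1 : W1) (add1 : W1 -> W1 -> W1)
  (E1 : Type) (isE1 : E1 -> Prop) (act1 : E1 -> W1 -> W1)
  (W2 : Type) (z2 : W2) (add2 : W2 -> W2 -> W2)
  (E2 : Type) (isE2 : E2 -> Prop) (act2 : E2 -> W2 -> W2)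
  (B T : W1 -> Prop) (B' T' : W2 -> Prop)
  (F : (W1 -> Prop) -> W2 -> Prop) (G : (W2 -> Prop) -> W1 -> Prop) n :
  submod z1 add1 isE1 act1 B -> submod z1 add1 isE1 act1 T -> sub_set B T ->
  (forall L L', sub_set L L' -> sub_set (F L) (F L')) ->
  (forall L L', sub_set L L' -> sub_set (G L) (G L')) ->
  (forall L, submod z1 add1 isE1 act1 L -> sub_set B L -> sub_set L T ->
     submod z2 add2 isE2 act2 (F L) /\ G (F L) = L) ->
  (forall L, submod z2 add2 isE2 act2 L -> sub_set B' L -> sub_set L T' ->
     submod z1 add1 isE1 act1 (G L) /\ F (G L) = L) ->
  F B = B' -> F T = T' ->
  has_length z1 add1 isE1 act1 B T n <-> has_length z2 add2 isE2 act2 B' T' n.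
Proof.
move=> smB smT BT monoF monoG FK GK FB FT.
have [_ GFB] := FK B smB (fun w => id) BT.
have [_ GFT] := FK T smT BT (fun w => id).
split; first by rewrite -FB -FT; apply: (has_length_iso_sub (T := T) (G := G)); rewrite ?FB ?FT.
rewrite -FB -FT => h; rewrite -GFB -GFT.
by apply: (has_length_iso_sub (T := F T) (G := F)) h; rewrite ?GFB ?GFT ?FB ?FT.
Qed.

(* The operator acting as negation makes every submodule a subgroup. *)
Record op_group (W : Type) (z : W) (add : W -> W -> W) (opp : W -> W)
  (E : Type) (isE : E -> Prop) (act : E -> W -> W) : Prop := OpGroup {
  opg_addA : forall u v w, add u (add v w) = add (add u v) w;
  opg_addC : forall u v, add u v = add v u;
  opg_add0 : forall u, add z u = u;
  opg_addN : forall u, add u (opp u) = z;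
  opg_actD : forall e, isE e -> forall u v, act e (add u v) = add (act e u) (act e v);
  opg_neg : exists2 e, isE e & forall u, act e u = opp u }.

Section OpGroup.
Variables (W : Type) (z : W) (add : W -> W -> W) (opp : W -> W)
  (E : Type) (isE : E -> Prop) (act : E -> W -> W).
Hypothesis opG : op_group z add opp isE act.
Local Notation sm := (submod z add isE act).
Local Notation hl := (has_length z add isE act).
Local Notation simple_quot := (simple_quot z add isE act).

Lemma opg_addKl u v : add (add u v) (opp u) = v.
Proof.
case: opG => addA addC add0 addN _ _.
by rewrite -addA addC -addA (addC _ u) addN addC add0.
Qed.

Lemma opg_addNK u v : add (add u (opp v)) v = u.
Proof.
case: opG => addA addC add0 addN _ _.
by rewrite -addA (addC _ v) addN addC add0.
Qed.

Lemma opg_act0 e : isE e -> act e z = z.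
Proof.
move=> isEe; have := opg_addKl (act e z) (act e z).
by rewrite -(opg_actD opG) // (opg_add0 opG) (opg_addN opG).
Qed.

Lemma submod0 : sm (fun w => w = z).
Proof.
split=> //; split=> [u v -> ->|e isEe u ->]; [exact: (opg_add0 opG) | exact: opg_act0].
Qed.

Lemma submod_opp L u : sm L -> L u -> L (opp u).
Proof. by case: opG => _ _ _ _ _ [e isEe <-] [_ [_ actL]]; apply: actL. Qed.

Lemma submod_addKl L u v : sm L -> L u -> L (add u v) -> L v.
Proof.
move=> smL Lu Luv; rewrite -(opg_addKl u v).
by case: (smL) => _ [addL _]; apply: addL => //; apply: submod_opp.
Qed.

Lemma submod_addKr L u v : sm L -> L v -> L (add u v) -> L u.
Proof. by rewrite (opg_addC opG); apply: submod_addKl. Qed.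

Definition meet (L K : W -> Prop) w := L w /\ K w.
Definition join (L K : W -> Prop) w := exists u v, [/\ L u, K v & w = add u v].

Lemma meetC L K : meet L K = meet K L.
Proof. by apply: sub_set_anti => w []. Qed.

Lemma meet_idl L K : sub_set L K -> meet L K = L.
Proof. by move=> LK; apply: sub_set_anti => [w []|w Lw] //; split=> //; apply: LK. Qed.

Lemma joinC L K : join L K = join K L.
Proof.
by apply: sub_set_anti => w [u [v [Lu Kv ->]]]; exists v, u; split=> //; apply: (opg_addC opG).
Qed.

Lemma submod_meet L K : sm L -> sm K -> sm (meet L K).
Proof.
move=> [L0 [addL actL]] [K0 [addK actK]]; split=> //; split.
  by move=> u v [Lu Ku] [Lv Kv]; split; [apply: addL | apply: addK].
by move=> e isEe u [Lu Ku]; split; [apply: actL | apply: actK].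
Qed.

Lemma submod_join L K : sm L -> sm K -> sm (join L K).
Proof.
case: opG => addA addC add0 _ actD _ [L0 [addL actL]] [K0 [addK actK]].
split; first by exists z, z; split; rewrite ?add0.
split=> [_ _ [u1 [v1 [Lu1 Kv1 ->]]] [u2 [v2 [Lu2 Kv2 ->]]] | e isEe _ [u [v [Lu Kv ->]]]].
  exists (add u1 u2), (add v1 v2); split; [exact: addL | exact: addK |].
  by rewrite -!addA; congr add; rewrite !addA (addC v1).
by exists (act e u), (act e v); split; [exact: actL | exact: actK | exact: actD].
Qed.

Lemma sub_joinl L K : sm K -> sub_set L (join L K).
Proof.
by case=> K0 _ w Lw; exists w, z; split; rewrite // (opg_addC opG) (opg_add0 opG).
Qed.

Lemma sub_joinr L K : sm L -> sub_set K (join L K).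
Proof. by case=> L0 _ w Kw; exists z, w; split; rewrite // (opg_add0 opG). Qed.

Lemma join_sub L K X : sm X -> sub_set L X -> sub_set K X -> sub_set (join L K) X.
Proof.
by case=> _ [addX _] LX KX _ [u [v [Lu Kv ->]]]; apply: addX; [apply: LX | apply: KX].
Qed.

Lemma has_length_diamond A C n : sm A -> sm C ->
  hl (meet A C) A n <-> hl C (join A C) n.
Proof.
move=> smA smC; have smAC := submod_meet smA smC.
apply: (has_length_iso (F := fun L => join L C) (G := fun Y => meet Y A)) => //.
- by move=> w [].
- by move=> L L' LL' w [u [v [Lu Cv ->]]]; exists u, v; split=> //; apply: LL'.
- by move=> L L' LL' w [L'w Aw]; split=> //; apply: LL'.
- move=> L smL ACL LA; split; first exact: submod_join.
  apply: sub_set_anti => [w [[u [v [Lu Cv ->]]] Auv] | w Lw].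
    have Av : A v by apply: submod_addKl Auv; last apply: LA.
    by case: smL => _ [addL _]; apply: addL => //; apply: ACL.
  by split; [apply: sub_joinl | apply: LA].
- move=> Y smY CY YAC; split; first exact: submod_meet.
  apply: sub_set_anti => [|y Yy]; first by apply: join_sub => // w [].
  have [u [v [Au Cv yE]]] := YAC y Yy.
  exists u, v; split=> //; split=> //.
  by apply: (submod_addKr (v := v)) => //; [apply: CY | rewrite -yE].
- apply: sub_set_anti; first by apply: join_sub => // w [].
  exact: sub_joinr.
Qed.

Lemma join_simple_quot K T L : simple_quot K T -> sm L -> sub_set L T -> ~ sub_set L K ->
  join K L = T.
Proof.
case=> smK smT KT _ maxK smL LT nLK.
have [KLK|//] := maxK _ (submod_join smK smL) (sub_joinl smL) (join_sub smT KT LT).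
by case: nLK; rewrite -KLK; apply: sub_joinr.
Qed.

Lemma simple_quot_meet K L : sm K -> sm L ->
  simple_quot K (join K L) -> simple_quot (meet L K) L.
Proof.
by move=> smK smL sKL; apply/has_length1/has_length_diamond => //; rewrite joinC; apply/has_length1.
Qed.

Lemma has_length_lower B T L n : hl B T n -> sm L -> sub_set B L -> sub_set L T ->
  exists m, hl B L m.
Proof.
elim: n T L => [|n IHn] T L.
  case/has_length0=> smB <- smL BL LB; exists 0%N.
  by apply/has_length0; rewrite (sub_set_anti BL LB).
case/has_lengthS=> K hBK sKT smL BL LT.
have [smB smK BK] := has_length_submod hBK.
have [m hm] := IHn K (meet L K) hBK (submod_meet smL smK)
  (fun w Bw => conj (BL w Bw) (BK w Bw)) (fun w => @proj2 _ _).
have [LK|nLK] := classic (sub_set L K); first by exists m; rewrite -(meet_idl LK).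
exists m.+1; apply/has_lengthS; exists (meet L K) => //.
by apply: simple_quot_meet => //; rewrite (join_simple_quot sKT).
Qed.

Lemma has_length_upper B T L n : hl B T n -> sm L -> sub_set B L -> sub_set L T ->
  exists m, hl L T m.
Proof.
elim: n T L => [|n IHn] T L.
  case/has_length0=> smB <- smL BL LB; exists 0%N.
  by apply/has_length0; rewrite (sub_set_anti LB BL).
case/has_lengthS=> K hBK sKT smL BL LT.
have [smB smK BK] := has_length_submod hBK.
have [m hm] := IHn K (meet K L) hBK (submod_meet smK smL)
  (fun w Bw => conj (BK w Bw) (BL w Bw)) (fun w => @proj1 _ _).
have [LK|nLK] := classic (sub_set L K).
  by exists m.+1; apply/has_lengthS; exists K; rewrite // -(meet_idl LK) meetC.
exists m; rewrite -(join_simple_quot sKT smL LT nLK).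
exact/has_length_diamond.
Qed.

Lemma has_length0_uniq B T n : hl B T 0 -> hl B T n -> n = 0%N.
Proof.
case/has_length0=> _ <-; case: n => // n /has_lengthS[K hBK [_ _ _ nBK _]].
by case: nBK; case: (has_length_submod hBK).
Qed.

Lemma has_length_uniq B T m n : hl B T m -> hl B T n -> m = n.
Proof.
elim: m T n => [|m IHm] T n hm hn; first by rewrite (has_length0_uniq hm hn).
case: n hn => [hn|n]; first by rewrite (has_length0_uniq hn hm).
case/has_lengthS: hm => K hK sKT /has_lengthS[K' hK' sK'T].
have [smK smT KT nTK _] := sKT; have [smK' _ K'T _ maxK'] := sK'T.
have [K'K|nK'K] := classic (sub_set K' K).
  case: (maxK' K smK K'K KT) => [KE|TE]; last by case: nTK; rewrite TE.
  by rewrite (IHm K' n _ hK') // -KE.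
have [smB _ BK] := has_length_submod hK; have [_ _ BK'] := has_length_submod hK'.
have [r hr] := has_length_lower hK (submod_meet smK smK')
  (fun w Bw => conj (BK w Bw) (BK' w Bw)) (fun w => @proj1 _ _).
have KK'T := join_simple_quot sKT smK' K'T nK'K.
have hKr : hl B K r.+1.
  apply/has_lengthS; exists (meet K K') => //.
  by apply: simple_quot_meet => //; rewrite joinC KK'T.
have hK'r : hl B K' r.+1.
  apply/has_lengthS; exists (meet K' K); first by rewrite meetC.
  by apply: simple_quot_meet => //; rewrite KK'T.
have mr := IHm K r.+1 hK hKr; rewrite -mr in hK'r.
by rewrite (IHm _ _ hK'r hK').
Qed.

Lemma has_length_split B T L n : hl B T n -> sm L -> sub_set B L -> sub_set L T ->
  exists a b, [/\ hl B L a, hl L T b & n = a + b]%N.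
Proof.
move=> hn smL BL LT.
have [a ha] := has_length_lower hn smL BL LT.
have [b hb] := has_length_upper hn smL BL LT.
by exists a, b; split=> //; apply: has_length_uniq hn (has_length_cat ha hb).
Qed.

End OpGroup.

Lemma has_length_morph (E : Type) (isE : E -> Prop)
  (W1 : Type) (z1 : W1) (add1 : W1 -> W1 -> W1) (opp1 : W1 -> W1) (act1 : E -> W1 -> W1)
  (W2 : Type) (z2 : W2) (add2 : W2 -> W2 -> W2) (act2 : E -> W2 -> W2)
  (phi : W1 -> W2) (B T : W1 -> Prop) (T' : W2 -> Prop) n :
  op_group z1 add1 opp1 isE act1 ->
  phi z1 = z2 -> (forall u v, phi (add1 u v) = add2 (phi u) (phi v)) ->
  (forall e, isE e -> forall w, phi (act1 e w) = act2 e (phi w)) ->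
  submod z1 add1 isE act1 B -> submod z1 add1 isE act1 T -> sub_set B T ->
  (forall w, T w -> T' (phi w)) -> (forall w', T' w' -> exists2 w, T w & phi w = w') ->
  (forall w, T w -> B w <-> phi w = z2) ->
  has_length z1 add1 isE act1 B T n <->
  has_length z2 add2 isE act2 (fun w' => w' = z2) T' n.
Proof.
move=> opG1 phi0 phiD phiE smB smT BT phiT phi_onto kerB.
apply: (has_length_iso (F := fun L w' => exists2 w, L w & phi w = w')
                       (G := fun L' w => T w /\ L' (phi w))) => //.
- by move=> L L' LL' w' [w /LL' L'w <-]; exists w.
- by move=> L L' LL' w [Tw /LL' L'w].
- move=> L [L0 [addL actL]] BL LT; split.
    split; first by exists z1.
    split=> [_ _ [u Lu <-] [v Lv <-]|e isEe _ [u Lu <-]].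
      by exists (add1 u v); [apply: addL | apply: phiD].
    by exists (act1 e u); [apply: actL | apply: phiE].
  apply: sub_set_anti => [w [Tw [l Ll phil]]|w Lw]; last by split; [apply: LT | exists w].
  have Tl : T l by apply: LT.
  have Bwl : B (add1 w (opp1 l)).
    apply/kerB; last by rewrite phiD -phil -phiD (opg_addN opG1).
    by case: (smT) => _ [addT _]; apply: addT => //; exact: (submod_opp opG1 smT Tl).
  by rewrite -(opg_addNK opG1 w l); apply: addL => //; apply: BL.
- move=> L' [L'0 [addL' actL']] _ L'T'; split.
    case: smT => T0 [addT actT]; split; first by split; rewrite ?phi0.
    split=> [u v [Tu L'u] [Tv L'v]|e isEe u [Tu L'u]].
      by split; [apply: addT | rewrite phiD; apply: addL'].
    by split; [apply: actT | rewrite phiE //; apply: actL'].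
  apply: sub_set_anti => [w' [w [_ L'w] <-] //|w' L'w'].
  by have [w Tw phiw] := phi_onto w' (L'T' w' L'w'); exists w; rewrite ?phiw.
- apply: sub_set_anti => [w' [w Bw <-]|w' ->]; first by apply/kerB => //; apply: BT.
  by exists z1; [case: smB | ].
- apply: sub_set_anti => [w' [w Tw <-]|w' /phi_onto[w Tw <-]]; first exact: phiT.
  by exists w.
Qed.

Section LinearMaps.
Variables (k : fieldType) (U W : lmodType k).

Definition linear_of (f : U -> W) (linf : lin f) : {linear U -> W} :=
  HB.pack f (GRing.isLinear.Build k U W *:%R f linf).

Section LinearLemmas.
Variable f : U -> W.
Hypothesis linf : lin f.
Lemma lin0 : f 0 = 0. Proof. exact: (raddf0 (linear_of linf)). Qed.
Lemma linD : {morph f : u v / u + v}. Proof. exact: (raddfD (linear_of linf)). Qed.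
Lemma linB : {morph f : u v / u - v}. Proof. exact: (raddfB (linear_of linf)). Qed.
Lemma linZ c : {morph f : u / c *: u}. Proof. exact: (linearZZ (linear_of linf)). Qed.
Lemma lin_sum (I : Type) (r : seq I) (P : pred I) (F : I -> U) :
  f (\sum_(i <- r | P i) F i) = \sum_(i <- r | P i) f (F i).
Proof. exact: (raddf_sum (linear_of linf)). Qed.
End LinearLemmas.

Lemma lin0f : lin (fun _ : U => 0 : W).
Proof. by move=> c u v; rewrite scaler0 addr0. Qed.

Lemma linDf (f g : U -> W) : lin f -> lin g -> lin (fun u => f u + g u).
Proof. by move=> linf ling c u v; rewrite linf ling scalerDr addrACA. Qed.

Lemma linNf (f : U -> W) : lin f -> lin (fun u => - f u).
Proof. by move=> linf c u v; rewrite linf opprD scalerN. Qed.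

Lemma lin_comp (Y : lmodType k) (f : U -> W) (g : W -> Y) :
  lin f -> lin g -> lin (fun u => g (f u)).
Proof. by move=> linf ling c u v; rewrite linf ling. Qed.

End LinearMaps.

Section Representation.
Variables (k : fieldType) (V A : finType) (s t : A -> V) (M : V -> lmodType k)
  (mM : forall a : A, {linear M (s a) -> M (t a)}).
Local Notation isE := (is_endo mM).

Lemma is_endo_opp : isE (fun i (m : M i) => - m).
Proof. by split=> [i c u v|a m]; [rewrite opprD scalerN | rewrite linearN]. Qed.

Lemma op_group_vertex i : op_group (0 : M i) +%R -%R isE (fun e m => e i m).
Proof.
split; [exact: addrA | exact: addrC | exact: add0r | exact: subrr | |].
  by move=> e [line _] u v; apply: linD.
by exists (fun j (m : M j) => - m); first exact: is_endo_opp.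
Qed.

Section DirectProduct.
Variables (C : finType) (tau : C -> V).

Definition dprodT := forall c : C, M (tau c).
Definition dprod_zero : dprodT := fun c => 0.
Definition dprod_add (u v : dprodT) : dprodT := fun c => u c + v c.
Definition dprod_opp (u : dprodT) : dprodT := fun c => - u c.
Definition dprod_act (e : endoT M) (u : dprodT) : dprodT := fun c => e (tau c) (u c).
Local Notation sm := (submod dprod_zero dprod_add isE dprod_act).
Local Notation hl := (has_length dprod_zero dprod_add isE dprod_act).

Lemma op_group_dprod : op_group dprod_zero dprod_add dprod_opp isE dprod_act.
Proof.
have opV := op_group_vertex.
split=> [u v w|u v|u|u|e isEe u v|].
- by apply: functional_extensionality_dep => c; apply: (opg_addA (opV _)).
- by apply: functional_extensionality_dep => c; apply: (opg_addC (opV _)).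
- by apply: functional_extensionality_dep => c; apply: (opg_add0 (opV _)).
- by apply: functional_extensionality_dep => c; apply: (opg_addN (opV _)).
- by apply: functional_extensionality_dep => c; apply: (opg_actD (opV _)).
by exists (fun j (m : M j) => - m); first exact: is_endo_opp.
Qed.

Definition dprod_single c0 (m : M (tau c0)) : dprodT := fun c =>
  if c0 =P c is ReflectT e then ecast c (M (tau c)) e m else 0.
Arguments dprod_single : clear implicits.

Lemma dprod_single_id c0 m : dprod_single c0 m c0 = m.
Proof. by rewrite /dprod_single; case: eqP => // e; rewrite (eq_irrelevance e (erefl c0)). Qed.

Lemma dprod_single_neq c0 m c : c0 != c -> dprod_single c0 m c = 0.
Proof. by rewrite /dprod_single; case: eqP. Qed.

Definition dprod_supp (r : seq C) (w : dprodT) := forall c, c \notin r -> w c = 0.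

Lemma submod_dprod_supp r : sm (dprod_supp r).
Proof.
split=> //; split=> [u v ur vr c cr|e [line _] u ur c cr].
  by rewrite /dprod_add ur // vr // addr0.
by rewrite /dprod_act ur // lin0.
Qed.

Lemma dprod_length (D : C -> nat) : (forall c, Dim_length mM (tau c) (D c)) ->
  hl (fun w => w = dprod_zero) (fun _ => True) (\sum_c D c).
Proof.
move=> HD.
have supp_cons r c : uniq (c :: r) -> hl (dprod_supp r) (dprod_supp (c :: r)) (D c).
  rewrite cons_uniq => /andP[cr _].
  apply/(has_length_morph (phi := fun w => w c) (W2 := M (tau c)) (z2 := 0) (add2 := +%R)
           (act2 := fun (e : endoT M) (m : M (tau c)) => e (tau c) m) (T' := fun _ => True)
           _ op_group_dprod) => //; last exact: HD.
  - exact: submod_dprod_supp.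
  - exact: submod_dprod_supp.
  - by move=> w wr c' /norP[_ c'r]; apply: wr.
  - move=> m _; exists (dprod_single c m); last exact: dprod_single_id.
    by move=> c' /norP[cc' _]; apply: dprod_single_neq; rewrite eq_sym.
  move=> w wcr; split=> [wr|wc0 c' c'r]; first exact: wr.
  by have [<-|cc'] := eqVneq c c'; [|apply: wcr; rewrite inE negb_or eq_sym cc'].
have supp_seq r : uniq r -> hl (dprod_supp [::]) (dprod_supp r) (\sum_(c <- r) D c).
  elim: r => [_|c r IHr cr].
    by rewrite big_nil; apply/has_length0; split=> //; apply: submod_dprod_supp.
  rewrite big_cons addnC; apply: has_length_cat (IHr _) (supp_cons _ _ cr).
  by case/andP: cr.
have supp0 : dprod_supp [::] = (fun w => w = dprod_zero).
  apply: sub_set_anti => [w w0|w -> c] //.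
  by apply: functional_extensionality_dep => c; apply: w0.
have suppT : dprod_supp (enum C) = (fun _ => True).
  by apply: sub_set_anti => // w _ c; rewrite mem_enum.
by rewrite -supp0 -suppT -big_enum; apply: supp_seq; apply: enum_uniq.
Qed.

End DirectProduct.

Section RowHoms.
Variables (X : finType) (n : X -> nat) (sg : X -> V).

Definition rhomT := forall x, 'rV[k]_(n x) -> M (sg x).
Definition rhom_zero : rhomT := fun x v => 0.
Definition rhom_add (f g : rhomT) : rhomT := fun x v => f x v + g x v.
Definition rhom_opp (f : rhomT) : rhomT := fun x v => - f x v.
Definition rhom_act (e : endoT M) (f : rhomT) : rhomT := fun x v => e (sg x) (f x v).
Definition rhom_lin (f : rhomT) := forall x, lin (f x).
Local Notation sm := (submod rhom_zero rhom_add isE rhom_act).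
Local Notation hl := (has_length rhom_zero rhom_add isE rhom_act).

Lemma rhomP (f g : rhomT) : (forall x v, f x v = g x v) -> f = g.
Proof.
move=> fg; apply: functional_extensionality_dep => x.
exact: functional_extensionality.
Qed.

Lemma op_group_rhom : op_group rhom_zero rhom_add rhom_opp isE rhom_act.
Proof.
have opV := op_group_vertex.
split=> [f g h|f g|f|f|e isEe f g|].
- by apply: rhomP => x v; apply: (opg_addA (opV _)).
- by apply: rhomP => x v; apply: (opg_addC (opV _)).
- by apply: rhomP => x v; apply: (opg_add0 (opV _)).
- by apply: rhomP => x v; apply: (opg_addN (opV _)).
- by apply: rhomP => x v; apply: (opg_actD (opV _)).
by exists (fun j (m : M j) => - m); first exact: is_endo_opp.
Qed.

Lemma submod_rhom_lin : sm rhom_lin.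
Proof.
split=> [x|]; first exact: lin0f.
by split=> [f g linf ling x|e [line _] f linf x]; [apply: linDf | apply: lin_comp].
Qed.

Local Notation basis := {x : X & 'I_(n x)}.

Definition rhom_coord (f : rhomT) : dprodT (fun c : basis => sg (tag c)) :=
  fun c => f (tag c) (delta_mx 0 (tagged c)).

Lemma lin_row_expand (U : lmodType k) m (f : 'rV[k]_m -> U) (v : 'rV[k]_m) : lin f ->
  f v = \sum_(j < m) v 0 j *: f (delta_mx 0 j).
Proof.
move=> linf; rewrite {1}(row_sum_delta v) (lin_sum linf).
by apply: eq_bigr => j _; rewrite (linZ linf).
Qed.

Lemma rhom_length (D : X -> nat) : (forall x, Dim_length mM (sg x) (D x)) ->
  hl (fun f => f = rhom_zero) rhom_lin (\sum_x n x * D x).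
Proof.
move=> HD.
have -> : (\sum_x n x * D x = \sum_(c : basis) D (tag c))%N.
  rewrite -(@sig_big_dep _ _ _ X (fun x => 'I_(n x)) xpredT (fun _ _ => true) (fun x _ => D x)).
  by apply: eq_bigr => x _; rewrite sum_nat_const card_ord.
apply/(has_length_morph (phi := rhom_coord) (z2 := dprod_zero _)
         (add2 := @dprod_add basis _) (act2 := @dprod_act basis _) (T' := fun _ => True) _
         op_group_rhom) => //.
- exact: submod0 op_group_rhom.
- exact: submod_rhom_lin.
- by move=> f -> x; apply: lin0f.
- move=> g _; exists (fun x v => \sum_(j < n x) v 0 j *: (g (Tagged _ j) : M (sg x))).
    move=> x c u v; rewrite scaler_sumr -big_split /=; apply: eq_bigr => j _.
    by rewrite !mxE scalerDl scalerA.
  apply: functional_extensionality_dep => -[x j]; rewrite /rhom_coord /=.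
  rewrite (bigD1 j) //= big1 => [|j' j'j]; first by rewrite mxE !eqxx scale1r addr0.
  by rewrite mxE (negbTE j'j) scale0r.
- move=> f linf; split=> [-> | f0]; first exact: functional_extensionality_dep.
  apply: rhomP => x v; rewrite (lin_row_expand _ (linf x)) big1 // => j _.
  have := congr1 (fun w => w (Tagged (fun x => 'I_(n x)) j)) f0.
  by rewrite /rhom_coord /= => ->; rewrite scaler0.
exact: dprod_length.
Qed.

End RowHoms.

Lemma Dim_length_exists : endofinite mM -> forall i, exists n, Dim_length mM i n.
Proof.
case=> N hN i.
have opT := op_group_dprod (fun j => j).
have smKi : submod (tot_zero M) (tot_add (M:=M)) isE (tot_act (M:=M)) (fun w => w i = 0).
  split=> //; split=> [u v ui vi|e [line _] u ui]; first by rewrite /tot_add ui vi addr0.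
  by rewrite /tot_act ui (lin0 (line i)).
have [n hn] := has_length_upper opT hN smKi (fun w w0 => congr1 (fun u => u i) w0) (fun _ _ => I).
exists n; apply/(has_length_morph (phi := fun w => w i) (B := fun w => w i = 0) (T := fun _ => True)
         (T' := fun _ => True) _ opT) => //.
by move=> m _; exists (dprod_single (c0 := i) m); last exact: dprod_single_id.
Qed.

Section HomExt.
Variables (d : V -> nat) (xA : forall a : A, 'M[k]_(d (s a), d (t a))).
Local Notation hz := (@hom_zero _ _ M d).
Local Notation hadd := (@hom_add _ _ M d).
Local Notation hact := (@hom_act _ _ M d).
Local Notation hom_lin := (@rhom_lin V d (fun i => i)).
Local Notation az := (@arr_zero _ _ _ s t M d).
Local Notation aadd := (@arr_add _ _ _ s t M d).
Local Notation aact := (@arr_act _ _ _ s t M d).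
Local Notation arr_lin := (@rhom_lin A (fun a => d (s a)) t).
Local Notation dl := (delta mM xA).

Lemma submod_is_hom : submod hz hadd isE hact (is_hom mM xA).
Proof.
split; first by split=> [i|a v]; [exact: lin0f | rewrite /hom_zero linear0].
split=> [f g [linf homf] [ling homg]|e [line endoe] f [linf homf]].
  by split=> [i|a v]; [apply: linDf | rewrite /hom_add linearD homf homg].
by split=> [i|a v]; [apply: lin_comp | rewrite /hom_act endoe homf].
Qed.

Lemma delta0 : dl hz = az.
Proof. by apply: rhomP => a v; rewrite /delta linear0 subrr. Qed.

Lemma deltaD f g : dl (hadd f g) = aadd (dl f) (dl g).
Proof. by apply: rhomP => a v; rewrite /delta /hom_add linearD opprD addrACA. Qed.

Lemma deltaE e : isE e -> forall f, dl (hact e f) = aact e (dl f).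
Proof.
by case=> line endoe f; apply: rhomP => a v; rewrite /delta /hom_act /arr_act endoe (linB (line _)).
Qed.

Lemma delta_lin f : hom_lin f -> arr_lin (dl f).
Proof.
move=> linf a; apply: linDf; first exact: lin_comp (linf _) (linearP _).
exact/linNf/(lin_comp (linearP (mulmxr _)) (linf _)).
Qed.

Lemma submod_im_delta : submod az aadd isE aact (im_delta mM xA).
Proof.
split; first by exists hz; split; [move=> i; apply: lin0f | rewrite delta0].
split=> [_ _ [f [linf ->]] [g [ling ->]]|e isEe _ [f [linf ->]]].
  by exists (hadd f g); split; [move=> i; apply: linDf | rewrite deltaD].
exists (hact e f); split; last by rewrite deltaE.
by case: isEe => line _ i; apply: lin_comp.
Qed.

Lemma has_length_im_delta n :
  has_length hz hadd isE hact (is_hom mM xA) hom_lin n <->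
  has_length az aadd isE aact (fun g => g = az) (im_delta mM xA) n.
Proof.
apply: (has_length_morph n (op_group_rhom d (fun i => i)) delta0 deltaD deltaE) => //.
- exact: submod_is_hom.
- exact: submod_rhom_lin.
- by move=> f [].
- by move=> f linf; exists f.
- by move=> g [f [linf ->]]; exists f.
move=> f linf; split=> [[_ homf]|f0]; first by apply: rhomP => a v; rewrite /delta homf subrr.
split=> // a v; apply/eqP; rewrite -subr_eq0; apply/eqP.
exact: (congr1 (fun g => g a v) f0).
Qed.

Lemma hom_ext_lengths D : (forall i, Dim_length mM i (D i)) ->
  exists h e x, [/\ hom_length mM xA h, ext_length mM xA e,
    (\sum_i d i * D i = h + x)%N & (\sum_a d (s a) * D (t a) = x + e)%N].
Proof.
move=> HD.
have opA := op_group_rhom (fun a => d (s a)) t.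
have zero_hom : sub_set (fun f => f = hz) (is_hom mM xA) by move=> f ->; case: submod_is_hom.
have zero_im : sub_set (fun g => g = az) (im_delta mM xA) by move=> g ->; case: submod_im_delta.
have im_lin : sub_set (im_delta mM xA) arr_lin by move=> g [f [linf ->]]; apply: delta_lin.
have [h [x [hh hx ->]]] := has_length_split (op_group_rhom d (fun i => i))
  (rhom_length d (sg := fun i => i) HD) submod_is_hom zero_hom (fun f => @proj1 _ _).
have [x' [e [hx' he ->]]] := has_length_split opA
  (rhom_length (fun a => d (s a)) (sg := t) (fun a => HD (t a))) submod_im_delta zero_im im_lin.
exists h, e, x; split=> //.
by rewrite (has_length_uniq opA hx' ((has_length_im_delta x).1 hx)).
Qed.

End HomExt.
End Representation.

Theorem lemma7 (k : fieldType) (V A : finType) (s t : A -> V)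
  (Hconn : quiver_connected s t) (Hacyc : quiver_acyclic s t)
  (d : V -> nat) (xA : forall a : A, 'M[k]_(d (s a), d (t a)))
  (M : V -> lmodType k) (mM : forall a : A, {linear M (s a) -> M (t a)})
  (Hendo : endofinite mM) :
  [/\ (forall i : V, exists n, Dim_length mM i n),
      (exists h, hom_length mM xA h),
      (exists e, ext_length mM xA e) &
      forall (D : V -> nat) (h e : nat),
        (forall i : V, Dim_length mM i (D i)) ->
        hom_length mM xA h -> ext_length mM xA e ->
        euler s t d D = h%:Z - e%:Z].
Proof.
have [D0 HD0] := fin_all_exists (Dim_length_exists Hendo).
have [h0 [e0 [x0 [hh0 he0 _ _]]]] := hom_ext_lengths xA HD0.
split=> [||| D h e HD hh he]; [exact: Dim_length_exists | by exists h0 | by exists e0 |].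
have [h' [e' [x [hh' he' sumV sumA]]]] := hom_ext_lengths xA HD.
rewrite (has_length_uniq (op_group_rhom mM d (fun i => i)) hh hh').
rewrite (has_length_uniq (op_group_rhom mM (fun a => d (s a)) t) he he').
rewrite /euler -!(big_morph Posz PoszD (erefl 0%:Z)) sumV sumA !PoszD.
exact: addrKA.
Qed.
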